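(* Consider the average-cost MDP described in the context, and let $\pi^\star(s)=\arg\min_{a\in\mathcal{A}(s)}Q(s,a)$ be the age-optimal policy. Fix $j\in\mathcal{I}$ and two states $s^1=\{(b_i^1,A_i^1,g_i^1,h_i^1)\}_{i\in\mathcal{I}}$ and $s^2=\{(b_i^2,A_i^2,g_i^2,h_i^2)\}_{i\in\mathcal{I}}$ such that (i) $A_j^2\ge A_j^1$, (ii) $A_i^2=A_i^1$ for all $i\neq j$, and (iii) $b_i^1=b_i^2$, $g_i^1=g_i^2$, $h_i^1=h_i^2$ for all $i\in\mathcal{I}$. If $\pi^\star(s^1)=T_j$, then $\pi^\star(s^2)=T_j$.
   Context: There are $N$ source nodes indexed by $\mathcal{I}=\{1,\dots,N\}$ and one destination. Time is slotted. The state of source $i$ is $s_i=(b_i,A_i,g_i,h_i)$, where $b_i\in\{0,1,\dots,b_{\max,i}\}$ is the discrete battery level (in energy quanta of $B_{\max,i}/b_{\max,i}$ joules), $A_i\in\{1,\dots,A_{\max,i}\}$ is the AoI of process $i$ at the destination, and $g_i,h_i$ are downlink/uplink channel power gains taking finitely many ordered values; the system state is $s=\{s_i\}_{i\in\mathcal{I}}$. Channel gains are i.i.d. over slots and independent of everything else, with pmfs $\mathbb{P}(g_i),\mathbb{P}(h_i)$. Actions $\mathcal{A}=\{H,T_1,\dots,T_N\}$ ($H$: energy transfer by destination; $T_i$: source $i$ transmits an update). Let $e_i^{\rm H}=\lfloor \frac{b_{\max,i}}{B_{\max,i}}\eta P g_i\rfloor$ and $e_i^{\rm T}=\lceil \frac{b_{\max,i}}{B_{\max,i}}\frac{\sigma^2}{h_i}(2^{\bar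 S}-1)\rceil$ with positive constants $\eta,P,\sigma^2,\bar S$; $T_i$ is feasible only if $b_i\ge e_i^{\rm T}$, and $\mathcal{A}(s)$ is the feasible action set. Transitions: $b_i'=b_i-e_i^{\rm T}$ if $a=T_i$, $b_i'=\min\{b_{\max,i},b_i+e_i^{\rm H}\}$ if $a=H$, else $b_i'=b_i$; $A_i'=1$ if $a=T_i$, else $A_i'=\min\{A_{\max,i},A_i+1\}$; $g_i',h_i'$ fresh draws; so $\mathbb{P}(s'\mid s,a)=\prod_i\mathbb{1}(b_i')\mathbb{1}(A_i')\mathbb{P}(g_i')\mathbb{P}(h_i')$. Cost per slot $\sum_i\theta_iA_i$, $\theta_i\ge0$, $\sum_i\theta_i=1$. $V$ and $\bar A^\star$ satisfy the Bellman equation $\bar A^\star+V(s)=\min_{a\in\mathcal{A}(s)}Q(s,a)$ with $Q(s,a)=\sum_i\theta_iA_i+\sum_{s'}\mathbb{P}(s'\mid s,a)V(s')$. *)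

From HB Require Import structures.
From mathcomp Require Import all_boot all_order all_algebra.
From mathcomp Require Import all_classical all_reals all_analysis.
Set Implicit Arguments. Unset Strict Implicit. Unset Printing Implicit Defensive.
Import Order.TTheory GRing.Theory Num.Theory.
Local Open Scope ring_scope.

Record model (R : realType) := Model {
  N : nat;                                   (* number of sources, I = 'I_N *)
  bmax : 'I_N -> nat;                        (* b_{max,i}: battery levels 0..bmax *)
  Bmax : 'I_N -> R;                          (* B_{max,i} in joules *)
  Amax : 'I_N -> nat;                        (* A_{max,i}: ages 1..Amax *)
  ng : 'I_N -> nat;                          (* number of downlink gain values *)
  nh : 'I_N -> nat;                          (* number of uplink gain values *)
  gv : forall i, 'I_(ng i) -> R;
  hv : forall i, 'I_(nh i) -> R;
  pg : forall i, 'I_(ng i) -> R;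
  ph : forall i, 'I_(nh i) -> R;
  eta : R; Ptx : R; sigma2 : R; Sbar : R;
  theta : 'I_N -> R
}.

Arguments N {R} m.
Arguments bmax {R} m i.  Arguments Bmax {R} m i.  Arguments Amax {R} m i.
Arguments ng {R} m i.  Arguments nh {R} m i.
Arguments gv {R} m {i} x.  Arguments hv {R} m {i} x.
Arguments pg {R} m {i} x.  Arguments ph {R} m {i} x.
Arguments eta {R} m.  Arguments Ptx {R} m.  Arguments sigma2 {R} m.
Arguments Sbar {R} m.  Arguments theta {R} m i.

Definition wf_model (R : realType) (M : model R) : Prop :=
  [/\ (forall i, 0 < Bmax M i),
      (forall i (x y : 'I_(ng M i)), (x < y)%N -> gv M x < gv M y),
      (forall i (x y : 'I_(nh M i)), (x < y)%N -> hv M x < hv M y),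
      (forall i (x : 'I_(ng M i)), 0 <= gv M x) & (forall i (x : 'I_(nh M i)), 0 < hv M x)] /\
  [/\ (forall i (x : 'I_(ng M i)), 0 <= pg M x), (forall i, \sum_(x : 'I_(ng M i)) pg M x = 1),
      (forall i (x : 'I_(nh M i)), 0 <= ph M x), (forall i, \sum_(x : 'I_(nh M i)) ph M x = 1)
    & [/\ 0 < eta M, 0 < Ptx M, 0 < sigma2 M & 0 < Sbar M]] /\
  ((forall i, 0 <= theta M i) /\ \sum_i theta M i = 1).

Definition lstate (R : realType) (M : model R) (i : 'I_(N M)) : finType :=
  ('I_(bmax M i).+1 * 'I_(Amax M i) * 'I_(ng M i) * 'I_(nh M i))%type.

Arguments lstate {R} M i.

Definition state (R : realType) (M : model R) : finType :=
  {dffun forall i : 'I_(N M), lstate M i}.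

Section MDP.
Variables (R : realType) (M : model R).

Definition bat (s : state M) i : nat := (s i).1.1.1.
Definition age (s : state M) i : nat := ((s i).1.1.2).+1.
Definition glev (s : state M) i : 'I_(ng M i) := (s i).1.2.
Definition hlev (s : state M) i : 'I_(nh M i) := (s i).2.
Definition gain_g (s : state M) i : R := gv M (glev s i).
Definition gain_h (s : state M) i : R := hv M (hlev s i).

(* Actions: H (energy transfer) or T_i (source i transmits). *)
Inductive action := H | T of 'I_(N M).

Definition eH (s : state M) i : nat :=
  Num.truncn ((bmax M i)%:R / Bmax M i * eta M * Ptx M * gain_g s i).
Definition eT (s : state M) i : nat :=
  absz (Num.ceil ((bmax M i)%:R / Bmax M i * (sigma2 M / gain_h s i)
                  * (2 `^ Sbar M - 1))).

Definition feasible (s : state M) (a : action) : bool :=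
  match a with H => true | T i => (eT s i <= bat s i)%N end.

Definition is_T (a : action) i : bool :=
  match a with T k => k == i | H => false end.

Definition next_b (s : state M) (a : action) i : nat :=
  match a with
  | H => minn (bmax M i) (bat s i + eH s i)
  | T k => if k == i then (bat s i - eT s i)%N else bat s i
  end.

Definition next_A (s : state M) (a : action) i : nat :=
  if is_T a i then 1%N else minn (Amax M i) (age s i).+1.

Definition trans (s : state M) (a : action) (s' : state M) : R :=
  \prod_(i < N M)
    ((bat s' i == next_b s a i)%:R * (age s' i == next_A s a i)%:R
     * pg M (glev s' i) * ph M (hlev s' i)).

Definition cost (s : state M) : R := \sum_(i < N M) theta M i * (age s i)%:R.

Definition Qf (V : state M -> R) (s : state M) (a : action) : R :=
  cost s + \sum_(s' : state M) trans s a s' * V s'.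

Definition bellman (Abar : R) (V : state M -> R) : Prop :=
  forall s : state M,
    (exists2 a, feasible s a & Abar + V s = Qf V s a) /\
    (forall a, feasible s a -> Abar + V s <= Qf V s a).

Definition optimal_at (V : state M -> R) (s : state M) (a : action) : Prop :=
  feasible s a /\ forall a', feasible s a' -> Qf V s a <= Qf V s a'.

End MDP.

From mathcomp Require Import all_boot all_order all_algebra.
From mathcomp Require Import all_classical all_reals all_analysis.
From mathcomp Require Import fingroup perm lra zify.
Import Order.TTheory GRing.Theory Num.Theory.
Set Implicit Arguments. Unset Strict Implicit. Unset Printing Implicit Defensive.
Local Open Scope ring_scope.

(* V is nondecreasing in A_j when all other coordinates are fixed.  Write
   Q(s,a) = cost s + F(s,a), F(s,a) the expected value of V at the successor.
   If t is older than s at j, the successors of s and t under a differ only in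
   A_j; transposing the two possible next values of A_j matches them with equal
   probabilities, and matched successors are again ordered.  Hence, given
   monotonicity one age step further, F(s,a) <= F(t,a), and for a optimal at t,
   V s <= Q(s,a) - Abar <= Q(t,a) - Abar = V t.  Since T_j resets A_j to 1 from
   both states, F(s2,T_j) = F(s1,T_j) <= F(s1,a) <= F(s2,a). *)

Section NextAge.
Variables (R : realType) (M : model R).
Implicit Types (s : state M) (a : action M).

Lemma age_le_Amax s i : (age s i <= Amax M i)%N.
Proof. exact: ltn_ord. Qed.

Lemma next_A_gt0 s a i : (0 < next_A s a i)%N.
Proof. by move: (age_le_Amax s i); rewrite /next_A /age; case: ifP => _; lia. Qed.

Lemma next_A_le_Amax s a i : (next_A s a i <= Amax M i)%N.
Proof. by move: (age_le_Amax s i); rewrite /next_A /age; case: ifP => _; lia. Qed.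

Lemma next_A_pred_lt s a i : ((next_A s a i).-1 < Amax M i)%N.
Proof. by move: (next_A_gt0 s a i) (next_A_le_Amax s a i); lia. Qed.

Definition next_age_idx s a i : 'I_(Amax M i) :=
  Ordinal (next_A_pred_lt s a i).

Lemma age_eq_next_A s a i (x : 'I_(Amax M i)) :
  (x.+1 == next_A s a i) = (x == next_age_idx s a i).
Proof. by rewrite -(prednK (next_A_gt0 s a i)) eqSS. Qed.

Lemma trans_neq0_age s a s' i :
  trans s a s' != 0 -> age s' i = next_A s a i.
Proof.
apply: contraNeq => hne; rewrite /trans (bigD1 i) //= (negbTE hne).
by rewrite mulr0 !mul0r.
Qed.

End NextAge.

Section PermuteAge.
Variables (R : realType) (M : model R) (j : 'I_(N M)).
Implicit Types (s t : state M) (σ : {perm 'I_(Amax M j)}).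

Definition permute_age σ s : state M :=
  [ffun i => @dfwith _ (lstate M) s j
                    ((s j).1.1.1, σ (s j).1.1.2, (s j).1.2, (s j).2) i].

Lemma permute_age_j σ s :
  permute_age σ s j = ((s j).1.1.1, σ (s j).1.1.2, (s j).1.2, (s j).2).
Proof. by rewrite ffunE; apply: dfwith_in. Qed.

Lemma permute_age_out σ s i : i != j -> permute_age σ s i = s i.
Proof. by move=> nij; rewrite ffunE; apply: dfwith_out; rewrite eq_sym. Qed.

Lemma permute_ageK σ : cancel (permute_age σ) (permute_age σ^-1).
Proof.
move=> s; apply/ffunP => i; case: (eqVneq i j) => [->|nij].
  by rewrite !permute_age_j /= permK; case: (s j) => [[[]]].
by rewrite !permute_age_out.
Qed.

Lemma permute_age1 s : permute_age 1 s = s.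
Proof.
apply/ffunP => i; case: (eqVneq i j) => [->|nij]; last by rewrite permute_age_out.
by rewrite permute_age_j perm1; case: (s j) => [[[]]].
Qed.

Lemma bat_permute_age σ s i : bat (permute_age σ s) i = bat s i.
Proof. by case: (eqVneq i j) => [->|nij]; rewrite /bat ?permute_age_j ?permute_age_out. Qed.

Lemma glev_permute_age σ s i : glev (permute_age σ s) i = glev s i.
Proof. by case: (eqVneq i j) => [->|nij]; rewrite /glev ?permute_age_j ?permute_age_out. Qed.

Lemma hlev_permute_age σ s i : hlev (permute_age σ s) i = hlev s i.
Proof. by case: (eqVneq i j) => [->|nij]; rewrite /hlev ?permute_age_j ?permute_age_out. Qed.

Lemma age_permute_age_out σ s i : i != j -> age (permute_age σ s) i = age s i.
Proof. by move=> nij; rewrite /age permute_age_out. Qed.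

Lemma age_permute_age σ s : age (permute_age σ s) j = (σ (s j).1.1.2).+1.
Proof. by rewrite /age permute_age_j. Qed.

End PermuteAge.

Section OlderAt.
Variables (R : realType) (M : model R) (j : 'I_(N M)).
Implicit Types (s t : state M) (a : action M) (σ : {perm 'I_(Amax M j)}).

Definition older_at s t : Prop :=
  [/\ (age s j <= age t j)%N, (forall i, i != j -> age t i = age s i)
    & forall i, [/\ bat s i = bat t i, glev s i = glev t i & hlev s i = hlev t i]].

Lemma older_at_bat s t i : older_at s t -> bat s i = bat t i.
Proof. by case=> _ _ /(_ i) []. Qed.

Lemma older_at_eH s t i : older_at s t -> eH s i = eH t i.
Proof. by case=> _ _ /(_ i) [_ e _]; rewrite /eH /gain_g e. Qed.

Lemma older_at_eT s t i : older_at s t -> eT s i = eT t i.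
Proof. by case=> _ _ /(_ i) [_ _ e]; rewrite /eT /gain_h e. Qed.

Lemma older_at_feasible s t a : older_at s t -> feasible s a = feasible t a.
Proof. by move=> hst; case: a => [|k] //=; rewrite (older_at_eT k hst) (older_at_bat k hst). Qed.

Lemma older_at_next_b s t a i : older_at s t -> next_b s a i = next_b t a i.
Proof.
move=> hst; case: a => [|k] /=;
  by rewrite (older_at_bat i hst) ?(older_at_eH i hst) ?(older_at_eT i hst).
Qed.

Lemma older_at_next_A_out s t a i : older_at s t -> i != j -> next_A s a i = next_A t a i.
Proof. by case=> _ hA _ nij; rewrite /next_A hA. Qed.

Lemma older_at_next_A_le s t a : older_at s t -> (next_A s a j <= next_A t a j)%N.
Proof. by case=> hj _ _; rewrite /next_A; case: ifP => // _; lia. Qed.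

Lemma older_at_eq s t : older_at s t -> age s j = age t j -> s = t.
Proof.
case=> _ hA hbgh hj; apply/ffunP => i; have [hb hg hh] := hbgh i.
have ha : age s i = age t i by case: (eqVneq i j) => [->|nij] //; rewrite hA.
move: hb hg hh ha; rewrite /bat /glev /hlev /age.
case: (s i) (t i) => [[[b1 x1] g1] k1] [[[b2 x2] g2] k2] /= eb -> -> [] ex.
by congr (_, _, _, _); apply: val_inj.
Qed.

Lemma older_at_permute_age s t a s' :
  older_at s t -> age s' j = next_A s a j ->
  older_at s' (permute_age (tperm (next_age_idx s a j) (next_age_idx t a j)) s').
Proof.
move=> hst hs'; split.
- have hx : (s' j).1.1.2 = next_age_idx s a j by apply/eqP; rewrite -age_eq_next_A -hs'.
  rewrite age_permute_age hx tpermL hs' prednK ?next_A_gt0 //.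
  exact: older_at_next_A_le.
- by move=> i nij; rewrite age_permute_age_out.
- by move=> i; rewrite bat_permute_age glev_permute_age hlev_permute_age.
Qed.

Lemma trans_permute_age s t a σ s' :
  older_at s t -> σ (next_age_idx s a j) = next_age_idx t a j ->
  trans t a (permute_age σ s') = trans s a s'.
Proof.
move=> hst hσ; apply: eq_bigr => i _.
rewrite bat_permute_age glev_permute_age hlev_permute_age (older_at_next_b a i hst).
case: (eqVneq i j) => [->|nij].
  by rewrite age_permute_age age_eq_next_A -hσ (inj_eq perm_inj) -age_eq_next_A.
by rewrite age_permute_age_out // (older_at_next_A_out a hst nij).
Qed.

Lemma sum_trans_permute_age s t a σ (F : state M -> R) :
  older_at s t -> σ (next_age_idx s a j) = next_age_idx t a j ->
  \sum_(s' : state M) trans t a s' * F s' =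
  \sum_(s' : state M) trans s a s' * F (permute_age σ s').
Proof.
move=> hst hσ; rewrite (reindex_inj (can_inj (permute_ageK σ))) /=.
by apply: eq_bigr => s' _; rewrite (trans_permute_age _ hst hσ).
Qed.

End OlderAt.

Section ValueMonotone.
Variables (R : realType) (M : model R) (j : 'I_(N M)).
Hypothesis hM : wf_model M.
Variables (Abar : R) (V : state M -> R).
Hypothesis hB : bellman Abar V.
Implicit Types (s t : state M) (a : action M).

Lemma trans_ge0 s a s' : 0 <= trans s a s'.
Proof.
case: hM => _ [[hpg _ hph _ _] _].
by apply: prodr_ge0 => i _; rewrite !mulr_ge0.
Qed.

Lemma older_at_cost s t : older_at j s t -> cost s <= cost t.
Proof.
case=> hj hA _; case: hM => _ [_ [htheta _]].
apply: ler_sum => i _; apply: ler_wpM2l => //; rewrite ler_nat.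
by case: (eqVneq i j) => [->|nij] //; rewrite hA.
Qed.

Lemma older_at_sum_trans s t a :
  older_at j s t ->
  (forall s', age s' j = next_A s a j ->
     V s' <= V (permute_age (tperm (next_age_idx s a j) (next_age_idx t a j)) s')) ->
  \sum_(s' : state M) trans s a s' * V s' <= \sum_(s' : state M) trans t a s' * V s'.
Proof.
move=> hst hV; rewrite (sum_trans_permute_age _ hst (tpermL _ _)).
apply: ler_sum => s' _; have [->|hne] := eqVneq (trans s a s') 0; first by rewrite !mul0r.
by apply: ler_wpM2l; [exact: trans_ge0 | apply/hV/trans_neq0_age].
Qed.

Lemma sum_trans_transmit s t a (F : state M -> R) :
  older_at j s t -> is_T a j ->
  \sum_(s' : state M) trans t a s' * F s' = \sum_(s' : state M) trans s a s' * F s'.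
Proof.
move=> hst hT; rewrite (sum_trans_permute_age (σ := 1) _ hst).
  by apply: eq_bigr => s' _; rewrite permute_age1.
by rewrite perm1; apply: val_inj; rewrite /= /next_A hT.
Qed.

Lemma older_at_value s t : older_at j s t -> V s <= V t.
Proof.
(* Induction on Amax - A_j: unless it transmits, an action strictly increases an
   age below Amax, and at A_j = Amax the two states coincide. *)
have [k] := ubnP (Amax M j - age s j)%N.
elim: k s t => // k IH s t hk hst.
have [hmax | hlt] := leqP (Amax M j) (age s j).
  case: (hst) => hj _ _; have ht := age_le_Amax t j.
  by rewrite (older_at_eq hst) //; lia.
have [[a fa eqa] _] := hB t.
have := (hB s).2 a; rewrite (older_at_feasible a hst) => /(_ fa) lea.
suff : Qf V s a <= Qf V t a by lra.
apply: lerD; first exact: older_at_cost.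
case hT: (is_T a j).
  by rewrite (sum_trans_transmit _ hst hT).
apply: older_at_sum_trans => // s' hs'.
apply: IH; last exact: older_at_permute_age.
by move: hk; rewrite hs' /next_A hT; lia.
Qed.

End ValueMonotone.

Theorem theorem1 (R : realType) (M : model R) (hM : wf_model M)
  (Abar : R) (V : state M -> R) (hB : bellman Abar V)
  (j : 'I_(N M)) (s1 s2 : state M)
  (h1 : (age s1 j <= age s2 j)%N)
  (h2 : forall i, i != j -> age s2 i = age s1 i)
  (h3 : forall i, [/\ bat s1 i = bat s2 i, glev s1 i = glev s2 i
                    & hlev s1 i = hlev s2 i]) :
  optimal_at V s1 (T j) -> optimal_at V s2 (T j).
Proof.
have hst : older_at j s1 s2 by [].
case=> fT1 optT1; split; first by rewrite -(older_at_feasible _ hst).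
move=> a fa2; have fa1 : feasible s1 a by rewrite (older_at_feasible _ hst).
have := optT1 a fa1; rewrite /Qf (sum_trans_transmit (a := T j) V hst (eqxx j)).
have : \sum_(s' : state M) trans s1 a s' * V s' <= \sum_(s' : state M) trans s2 a s' * V s'.
  apply: (older_at_sum_trans hM hst) => s' hs'.
  exact/(older_at_value hM hB)/older_at_permute_age.
lra.
Qed.
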